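(* Let $r,n,k$ be positive integers with $k\geq 2$, $n\in F_r$, and $\omega(n)\geq k$. Then $Q_{k-1}(n)>\lambda_k(r)\,(P_k(n)-r)$.
   Context: For a positive integer $r$, $S_r$ is the multiplicative arithmetic function with $S_r(p^{\alpha})=0$ if $p\leq r$ and $S_r(p^{\alpha})=p^{\alpha-1}(p-r)$ if $p>r$, for all primes $p$ and positive integers $\alpha$. $B_r=\{n\in\mathbb{N}: S_r(n)>0\}$ (positive integers whose smallest prime factor exceeds $r$, together with $1$). $F_r$ is the set of $n\in B_r$ such that $S_r(n)<S_r(m)$ for all $m\in B_r$ with $m>n$. $\omega(n)$ is the number of distinct prime factors of $n$. $P_k(n)$ is the $k$-th largest prime divisor of $n$, and $Q_k(n)$ is the $k$-th smallest prime that is larger than $r$ and does not divide $n$. $r\#$ is the product of all primes $\leq r$ (with $1\#=1$). The Jacobsthal function $J(m)$ is the smallest positive integer $a$ such that every set of $a$ consecutive integers contains an element coprime to $m$; $J_r=J(r\#)$. $\lambda_k(r)$ is the unique positive real root of $\frac{J_r}{r}x^k+kx-(k-1)$. *)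

From mathcomp Require Import all_boot all_order all_algebra.
From mathcomp Require Import boolp reals.
From mathcomp Require Import zify.
Set Implicit Arguments. Unset Strict Implicit. Unset Printing Implicit Defensive.
Import Order.TTheory GRing.Theory Num.Theory.

Definition S (r n : nat) : nat :=
  \prod_(p <- primes n) (if p <= r then 0 else p ^ (logn p n).-1 * (p - r)).

Definition inB (r n : nat) : bool := (0 < n) && (0 < S r n).

Definition inF (r n : nat) : Prop :=
  inB r n /\ forall m, inB r m -> n < m -> S r n < S r m.

Definition omega (n : nat) : nat := size (primes n).

(* k-th largest prime divisor (k >= 1) *)
Definition P (k n : nat) : nat := nth 0 (rev (primes n)) k.-1.

Definition goodQ (r n p : nat) : bool := [&& prime p, r < p & ~~ (p %| n)].

Lemma Q_ex (r n k : nat) : 0 < n -> exists q, k <= count (goodQ r n) (iota 0 q.+1).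
Proof.
move=> n0; elim: k => [|k [q Hq]]; first by exists 0.
have [p ltp pp] := prime_above (maxn q (maxn r n)).
exists p.
have hqp : q < p by move: ltp; rewrite !gtn_max => /andP[-> _].
have gp : goodQ r n p.
  move: ltp; rewrite !gtn_max => /andP[_ /andP[hr hn]].
  rewrite /goodQ pp hr /=; apply/negP => /(dvdn_leq n0); lia.
have -> : iota 0 p.+1 = iota 0 q.+1 ++ iota q.+1 (p - q).
  by rewrite -iotaD; congr iota; lia.
rewrite count_cat.
have : 0 < count (goodQ r n) (iota q.+1 (p - q)).
  rewrite -has_count; apply/hasP; exists p => //.
  rewrite mem_iota; lia.
lia.
Qed.

(* Q_k(n) : k-th smallest prime > r not dividing n (defined for n > 0, k >= 1). *)
Definition Q (r n k : nat) : nat :=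
  match (0 < n) as b return (0 < n) = b -> nat with
  | true => fun h => ex_minn (Q_ex r k h)
  | false => fun _ => 0
  end erefl.

Definition primorial (r : nat) : nat := \prod_(p < r.+1 | prime p) p.

Lemma primorial_gt0 r : 0 < primorial r.
Proof. rewrite /primorial; elim/big_ind: _ => // [x y|i /prime_gt0 //]; by rewrite muln_gt0 => -> ->. Qed.

Definition jac_ok (m a : nat) : Prop :=
  forall x : int, exists2 i : nat, i < a & coprimez (x + i%:Z)%R m%:Z.

Lemma jac_ex (m : nat) : 0 < m -> exists a, (0 < a) && `[< jac_ok m a >].
Proof.
move=> m0; exists m; rewrite m0 /=; apply/asboolP => x.
have mz : (m%:Z != 0)%R by rewrite eqz_nat -lt0n.
exists `|((1 - x) %% m%:Z)%Z|%N.
  rewrite -(ltz_nat) gez0_abs ?modz_ge0 // ltz_pmod //.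
rewrite gez0_abs ?modz_ge0 //.
rewrite /coprimez -gcdz_modl modzDmr.
by rewrite GRing.addrC GRing.subrK gcdz_modl gcdzC gcdz1.
Qed.

Definition J (m : nat) : nat :=
  match (0 < m) as b return (0 < m) = b -> nat with
  | true => fun h => ex_minn (jac_ex h)
  | false => fun _ => 0
  end erefl.

Definition Jr (r : nat) : nat := J (primorial r).

From mathcomp Require Import all_boot all_order all_algebra.
From mathcomp Require Import boolp reals sequences exp.
From mathcomp Require Import zify ring lra.
Import Order.TTheory GRing.Theory Num.Theory.
Set Implicit Arguments. Unset Strict Implicit. Unset Printing Implicit Defensive.

(* Suppose Q_{k-1}(n) <= lambda (P_k(n) - r).  Replace the k largest prime factors
   of n (product A) by the k-1 smallest primes q > r not dividing n (product B)
   and by a factor y in (A/B, A/B + J_r] coprime to r#, which exists by the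
   definition of the Jacobsthal function.  The resulting m exceeds n and lies
   in B_r, so S_r(m) > S_r(n) because n is in F_r; comparing the factors
   changed in S_r gives prod (p - r) < y * prod (q - r).  On the other hand,
   with u = r / Q_{k-1}(n), the quotients of both products are controlled by
   (1 + lambda u)^k and (1 - u)^(k-1), and 1 + x <= e^x together with the
   equation defining lambda yields (A/B + J_r) prod (q - r) <= prod (p - r). *)

Definition S_factor (r N q : nat) : nat :=
  if q <= r then 0 else q ^ (logn q N).-1 * (q - r).

Lemma S_factorE r N : S r N = \prod_(q <- primes N) S_factor r N q.
Proof. by []. Qed.

Lemma S_mul_prime r p N : prime p -> 0 < N ->
  S r (p * N) = if p <= r then 0 else if p %| N then p * S r N else (p - r) * S r N.
Proof.
move=> pp N0.
have pN0 : 0 < p * N by rewrite muln_gt0 prime_gt0.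
have S_factor_mulp q : q != p -> S_factor r (p * N) q = S_factor r N q.
  by move=> qp; rewrite /S_factor (lognM _ (prime_gt0 pp) N0) logn_prime // (negbTE qp).
have logn_mulp : logn p (p * N) = (logn p N).+1.
  by rewrite (lognM _ (prime_gt0 pp) N0) logn_prime // eqxx.
case: (boolP (p %| N)) => pN.
  have perm_primes : perm_eq (primes (p * N)) (primes N).
    apply: uniq_perm; rewrite ?primes_uniq // => q.
    rewrite !mem_primes pN0 N0 /=; case: (boolP (prime q)) => //= qq.
    rewrite Euclid_dvdM //; case: (boolP (q %| N)) => qN; rewrite ?orbT ?orbF //.
    by apply/negP; rewrite dvdn_prime2 // => /eqP qp; move: qN; rewrite qp pN.
  have pin : p \in primes N by rewrite mem_primes pp N0.
  rewrite !S_factorE (perm_big _ perm_primes) !(bigD1_seq p) ?primes_uniq //.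
  rewrite (eq_bigr (S_factor r N)) => [|q /S_factor_mulp //].
  rewrite /S_factor logn_mulp; case: leqP => // _.
  have : 0 < logn p N by rewrite logn_gt0.
  by case: (logn p N) => // e _; rewrite /= expnS -!mulnA.
have pnin : p \notin primes N by rewrite mem_primes pp N0.
have perm_primes : perm_eq (primes (p * N)) (p :: primes N).
  apply: uniq_perm; rewrite /= ?pnin ?primes_uniq // => q.
  rewrite in_cons !mem_primes pN0 N0 /=; case: (boolP (prime q)) => //= qq.
  rewrite Euclid_dvdM // dvdn_prime2 //.
  by case: eqP => // qp; rewrite qp pp in qq.
rewrite !S_factorE (perm_big _ perm_primes) big_cons.
rewrite (eq_big_seq (S_factor r N)) => [|q qin]; last first.
  by apply: S_factor_mulp; apply: contraNneq pnin => <-.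
rewrite /S_factor logn_mulp; case: leqP => // _.
by rewrite (_ : logn p N = 0) ?expn0 ?mul1n //; apply/eqP; rewrite -leqn0 leqNgt logn_gt0.
Qed.

Lemma S_mul_prime_le r p N : prime p -> 0 < N -> S r (p * N) <= p * S r N.
Proof.
move=> pp N0; rewrite S_mul_prime //; case: ifP => // _; case: ifP => // _.
by rewrite leq_mul2r leq_subr orbT.
Qed.

Lemma S_mul_le r x N : 0 < x -> 0 < N -> S r (x * N) <= x * S r N.
Proof.
elim/ltn_ind: x => x IH x0 N0.
have [x_gt1 | x_le1] := ltnP 1 x; last by rewrite (_ : x = 1) ?mul1n //; lia.
have pp := pdiv_prime x_gt1.
have /dvdnP [x' x_eq] := pdiv_dvd x.
have x'0 : 0 < x' by move: x0; rewrite x_eq muln_gt0 => /andP[].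
have x'_lt : x' < x by rewrite x_eq -{1}(muln1 x') ltn_mul2l x'0 prime_gt1.
rewrite x_eq [x' * _]mulnC -!mulnA.
apply: leq_trans (S_mul_prime_le r pp _) _; first by rewrite muln_gt0 x'0.
by rewrite leq_mul2l IH ?orbT.
Qed.

Lemma prod_primes_gt0 (l : seq nat) : all prime l -> 0 < \prod_(x <- l) x.
Proof. by move=> /allP l_prime; rewrite big_seq prodn_cond_gt0 // => x /l_prime/prime_gt0. Qed.

Lemma prime_dvd_prod_primes q (l : seq nat) :
  prime q -> all prime l -> (q %| \prod_(x <- l) x) = (q \in l).
Proof.
move=> pq /allP l_prime; rewrite Euclid_dvd_prod // big_has.
apply/hasP/idP => [[x xl qx] | ql]; last by exists q.
by move: qx; rewrite (dvdn_prime2 pq (l_prime x xl)) => /eqP ->.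
Qed.

Lemma S_mul_prod_ge r N ps : 0 < N -> all prime ps -> all (fun x => r < x) ps ->
  \prod_(x <- ps) (x - r) * S r N <= S r (N * \prod_(x <- ps) x).
Proof.
move=> N0; elim: ps => [|x l IH]; rewrite ?big_nil ?mul1n ?muln1 // !big_cons /=.
move=> /andP[px pl] /andP[rx rl].
have lN0 : 0 < N * \prod_(y <- l) y by rewrite muln_gt0 N0 prod_primes_gt0.
rewrite mulnCA -mulnA S_mul_prime // (leqNgt x r) rx /=.
apply: leq_trans (_ : (x - r) * S r (N * \prod_(y <- l) y) <= _).
  by rewrite leq_mul2l IH ?orbT.
by case: ifP => // _; rewrite leq_mul2r leq_subr orbT.
Qed.

Lemma S_mul_prod_new r N qs : 0 < N -> uniq qs -> all prime qs ->
  all (fun x => r < x) qs -> all (fun q => ~~ (q %| N)) qs ->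
  S r (N * \prod_(x <- qs) x) = \prod_(x <- qs) (x - r) * S r N.
Proof.
move=> N0; elim: qs => [|x l IH]; rewrite ?big_nil ?mul1n ?muln1 // !big_cons /=.
move=> /andP[xl ul] /andP[px pl] /andP[rx rl] /andP[xN lN].
have x_ndvd : ~~ (x %| N * \prod_(y <- l) y).
  by rewrite Euclid_dvdM // negb_or xN prime_dvd_prod_primes.
rewrite mulnCA S_mul_prime ?muln_gt0 ?N0 ?prod_primes_gt0 //.
by rewrite (leqNgt x r) rx /= (negbTE x_ndvd) IH // mulnA.
Qed.

Lemma inBP r m : reflect (0 < m /\ forall q, prime q -> q %| m -> r < q) (inB r m).
Proof.
apply: (iffP andP) => -[m0 Hm]; split=> //.
  move=> q qp qm; rewrite ltnNge; apply/negP => qr.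
  by move: Hm; rewrite S_factorE (big_rem q) ?mem_primes ?qp ?m0 //= /S_factor qr.
rewrite S_factorE big_seq prodn_cond_gt0 // => q; rewrite mem_primes /S_factor.
case/and3P=> qp _ qm; have rq := Hm q qp qm; rewrite (leqNgt q r) rq /=.
by rewrite muln_gt0 expn_gt0 prime_gt0 //= subn_gt0.
Qed.

Lemma inB_mul r a b : inB r a -> inB r b -> inB r (a * b).
Proof.
move=> /inBP[a0 Ha] /inBP[b0 Hb]; apply/inBP; split=> [|q qp]; first by rewrite muln_gt0 a0.
by rewrite Euclid_dvdM // => /orP[/(Ha q qp) | /(Hb q qp)].
Qed.

Lemma inB_dvd r n d : inB r n -> d %| n -> inB r d.
Proof.
move=> /inBP[n0 Hn] dn; apply/inBP; split; first exact: dvdn_gt0 dn.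
by move=> q qp qd; apply: Hn qp (dvdn_trans qd dn).
Qed.

Lemma inB_prod_primes r (l : seq nat) :
  all (fun q => prime q && (r < q)) l -> inB r (\prod_(x <- l) x).
Proof.
move=> l_good; have l_prime : all prime l by apply: sub_all l_good => q /andP[].
apply/inBP; split=> [|q qp]; first exact: prod_primes_gt0.
by rewrite prime_dvd_prod_primes // => /(allP l_good) /andP[].
Qed.

Lemma inB_coprime_primorial r y : 0 < y -> coprime y (primorial r) -> inB r y.
Proof.
move=> y0 cy; apply/inBP; split=> // q qp qy; rewrite ltnNge; apply/negP => qr.
have q_dvd : q %| primorial r.
  by rewrite /primorial (bigD1 (Ordinal (qr : q < r.+1))) //= dvdn_mulr.
have : q %| gcdn y (primorial r) by rewrite dvdn_gcd qy q_dvd.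
by rewrite (eqP cy) dvdn1 => /eqP q1; rewrite q1 in qp.
Qed.

Lemma Q_count r n k : 0 < n -> k <= count (goodQ r n) (iota 0 (Q r n k).+1).
Proof.
(* Turn the scrutinee of the dependent match (and the right-hand side of the
   type of its equation) into [true], leaving the term [erefl] untouched. *)
move=> n0; rewrite /Q; move: (erefl (0 < n)); rewrite {2 3}n0 => e.
by case: ex_minnP.
Qed.

Lemma J_spec m : 0 < m -> 0 < J m /\ jac_ok m (J m).
Proof.
move=> m0; pose good a := (0 < a) && `[< jac_ok m a >].
suff /andP[-> /asboolP //] : good (J m).
rewrite /J; move: (erefl (0 < m)); rewrite {2 3}m0 => e.
by case: ex_minnP.
Qed.

Lemma prod_seq_const (l : seq nat) c : \prod_(x <- l) c = c ^ size l.
Proof. by elim: l => [|x l IH]; rewrite ?big_nil ?big_cons ?IH ?expnS. Qed.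

Lemma leq_prod_scaled (l : seq nat) (F G : nat -> nat) c d :
  {in l, forall x, F x * c <= G x * d} ->
  \prod_(x <- l) F x * c ^ size l <= \prod_(x <- l) G x * d ^ size l.
Proof.
move=> FG; rewrite -!prod_seq_const -!big_split /= big_seq [leqRHS]big_seq.
exact: leq_prod.
Qed.

Lemma prod_ratio_le_min r p (l : seq nat) : {in l, forall x, p <= x} ->
  \prod_(x <- l) x * (p - r) ^ size l <= \prod_(x <- l) (x - r) * p ^ size l.
Proof.
move=> lp; apply: leq_prod_scaled => x /lp px.
by rewrite mulnBr mulnBl leq_sub2l // mulnC leq_mul2r px orbT.
Qed.

Lemma prod_ratio_ge_max r Q (l : seq nat) : {in l, forall x, x <= Q} ->
  \prod_(x <- l) (x - r) * Q ^ size l <= \prod_(x <- l) x * (Q - r) ^ size l.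
Proof.
move=> lQ; apply: leq_prod_scaled => x /lQ xQ.
by rewrite mulnBr mulnBl leq_sub2l // mulnC leq_mul2l xQ orbT.
Qed.

Lemma prod_subn_ge r p (l : seq nat) : {in l, forall x, p <= x} ->
  (p - r) ^ size l <= \prod_(x <- l) (x - r).
Proof.
move=> lp; rewrite -prod_seq_const big_seq [leqRHS]big_seq.
by apply: leq_prod => x /lp; apply: leq_sub2r.
Qed.

Lemma prod_subn_le r Q (l : seq nat) : {in l, forall x, x <= Q} ->
  \prod_(x <- l) (x - r) <= (Q - r) ^ size l.
Proof.
move=> lQ; rewrite -prod_seq_const big_seq [leqRHS]big_seq.
by apply: leq_prod => x /lQ; apply: leq_sub2r.
Qed.

Lemma largest_primes n k : 0 < k <= omega n -> exists ps : seq nat,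
  [/\ size ps = k, uniq ps, {subset ps <= primes n}, P k n \in ps
    & {in ps, forall x, P k n <= x}].
Proof.
rewrite /omega => /andP[k0 k_le].
set s := size (primes n); exists (drop (s - k) (primes n)).
have P_eq : P k n = nth 0 (primes n) (s - k).
  by rewrite /P nth_rev; [congr nth; lia | lia].
have ps_eq : drop (s - k) (primes n) = P k n :: drop (s - k).+1 (primes n).
  by rewrite P_eq -drop_nth //; lia.
have ps_sorted : sorted ltn (drop (s - k) (primes n)).
  exact: (subseq_sorted ltn_trans) (drop_subseq _ _) (sorted_primes n).
split.
- by rewrite size_drop; lia.
- by rewrite drop_uniq // primes_uniq.
- by move=> x /mem_drop.
- by rewrite ps_eq mem_head.
move: ps_sorted; rewrite ps_eq /= => /(order_path_min ltn_trans) /allP P_lt x.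
by rewrite in_cons => /orP[/eqP -> // | /P_lt /ltnW].
Qed.

Lemma smallest_good_primes r n k : 0 < n -> exists qs : seq nat,
  [/\ size qs = k, uniq qs, all (goodQ r n) qs & {in qs, forall q, q <= Q r n k}].
Proof.
move=> n0; exists (take k [seq q <- iota 0 (Q r n k).+1 | goodQ r n q]).
split.
- by rewrite size_takel // size_filter Q_count.
- by rewrite take_uniq // filter_uniq // iota_uniq.
- by apply/allP => q /mem_take; rewrite mem_filter => /andP[].
by move=> q /mem_take; rewrite mem_filter mem_iota => /and3P[_ _]; rewrite ltnS.
Qed.

Lemma Q_gt r n k : 0 < n -> 0 < k -> r < Q r n k.
Proof.
move=> n0 k0; have [[|q qs] [size_qs _ qs_good qs_le]] := smallest_good_primes r k n0.
  by rewrite -size_qs in k0.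
move: qs_good => /andP[/and3P[_ rq _] _]; exact: leq_trans rq (qs_le q (mem_head _ _)).
Qed.

Lemma prod_uniq_primes_dvd n (l : seq nat) :
  uniq l -> {subset l <= primes n} -> \prod_(x <- l) x %| n.
Proof.
elim: l => [|x l IH] /=; rewrite ?big_nil ?dvd1n // big_cons => /andP[xl l_uniq] l_sub.
have l_sub' : {subset l <= primes n} by move=> y yl; rewrite l_sub // in_cons yl orbT.
have l_prime : all prime l by apply/allP => y /l_sub'; rewrite mem_primes => /andP[].
have := l_sub x (mem_head _ _); rewrite mem_primes => /and3P[xp _ xn].
by rewrite Gauss_dvd ?xn ?IH // prime_coprime // prime_dvd_prod_primes.
Qed.

Lemma inF_prime_swap r n ps qs : inF r n ->
  uniq ps -> {subset ps <= primes n} -> uniq qs -> all (goodQ r n) qs ->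
  \prod_(x <- ps) (x - r) <
    (\prod_(x <- ps) x %/ \prod_(q <- qs) q + Jr r) * \prod_(q <- qs) (q - r).
Proof.
move=> [n_B n_max] ps_uniq ps_primes qs_uniq qs_good.
have n0 : 0 < n by case/andP: n_B.
have ps_prime : all prime ps by apply/allP => x /ps_primes; rewrite mem_primes => /andP[].
have ps_gt_r : all (fun x => r < x) ps.
  apply/allP => x /ps_primes; rewrite mem_primes => /and3P[xp _ xn].
  by case/inBP: n_B => _ /(_ x xp xn).
have qs_prime_gt_r : all (fun q => prime q && (r < q)) qs.
  by apply: sub_all qs_good => q /and3P[-> ->].
set A := \prod_(x <- ps) x; set B := \prod_(q <- qs) q.
set C := \prod_(x <- ps) (x - r); set D := \prod_(q <- qs) (q - r).
have B0 : 0 < B by case/inBP: (inB_prod_primes qs_prime_gt_r).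
have [_ jacobsthal] := J_spec (primorial_gt0 r).
have [i i_lt y_coprime] := jacobsthal (A %/ B).+1.
set y := (A %/ B).+1 + i.
have {}y_coprime : coprime y (primorial r).
  by move: y_coprime; rewrite coprimezE -PoszD !absz_nat.
set n' := n %/ A.
have n_eq : n = n' * A by rewrite divnK // prod_uniq_primes_dvd.
have n'_dvd : n' %| n by rewrite [in X in _ %| X]n_eq dvdn_mulr.
have n'0 : 0 < n' by move: n0; rewrite n_eq muln_gt0 => /andP[].
have qs_ndvd : all (fun q => ~~ (q %| n')) qs.
  by apply: sub_all qs_good => q /and3P[_ _]; apply: contra => /dvdn_trans; apply.
set m := n' * B * y.
have m_B : inB r m.
  rewrite !inB_mul ?inB_prod_primes ?(inB_dvd n_B n'_dvd) //.
  by apply: inB_coprime_primorial; rewrite // addSn.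
have n_lt_m : n < m.
  rewrite n_eq /m -mulnA ltn_mul2l n'0 /=.
  by apply: leq_trans (ltn_ceil A B0) _; rewrite mulnC leq_mul2l leq_addr orbT.
have Sm_le : S r m <= y * (D * S r n').
  rewrite /m mulnC; apply: leq_trans (S_mul_le r _ _) _; rewrite ?addSn ?muln_gt0 ?n'0 //.
  by rewrite S_mul_prod_new // (sub_all _ qs_prime_gt_r) // => q /andP[].
have Sn_ge : C * S r n' <= S r n.
  by rewrite [in S r n]n_eq; apply: S_mul_prod_ge.
have y_le : y <= A %/ B + Jr r by rewrite /y addSnnS leq_add2l.
rewrite ltnNge; apply/negP => /(leq_trans (leq_mul y_le (leqnn D))) yD_le.
have := n_max m m_B n_lt_m; rewrite ltnNge => /negP; apply.
by apply: leq_trans Sm_le (leq_trans _ Sn_ge); rewrite mulnA leq_mul2r yD_le orbT.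
Qed.

Local Open Scope ring_scope.

Lemma exp_weighted_product_le1 (R : realType) (K : nat) (u lam mu : R) :
  0 <= u -> u <= 1 -> 0 <= lam -> 0 <= mu -> mu = K%:R - K.+1%:R * lam ->
  (1 - u) ^+ K * ((1 + lam * u) ^+ K.+1 + mu * u) <= 1.
Proof.
move=> u0 u1 lam0 mu0 mu_def.
have lamu0 : 0 <= lam * u by rewrite mulr_ge0.
have muu0 : 0 <= mu * u by rewrite mulr_ge0.
have sum_le_prod : (1 + lam * u) ^+ K.+1 + mu * u <= (1 + lam * u) ^+ K.+1 * (1 + mu * u).
  rewrite mulrDr mulr1 lerD2l -{1}(mul1r (mu * u)) ler_wpM2r //.
  by rewrite exprn_ege1 // lerDl.
have le_exp (x : R) (n : nat) : 0 <= 1 + x -> (1 + x) ^+ n <= expR x ^+ n.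
  move=> x0; rewrite lerXn2r ?nnegrE ?expR_ge0 //; exact: expR_ge1Dx.
apply: le_trans (_ : expR (- u) ^+ K * (expR (lam * u) ^+ K.+1 * expR (mu * u)) <= 1).
  apply: ler_pM.
  - by rewrite exprn_ge0 ?subr_ge0.
  - by rewrite addr_ge0 ?exprn_ge0 ?addr_ge0.
  - by apply: le_exp; lra.
  apply: le_trans sum_le_prod _.
  apply: ler_pM; rewrite ?exprn_ge0 ?addr_ge0 ?expR_ge1Dx //; apply: le_exp; lra.
rewrite -!expRM_natl -!expRD.
have -> : K%:R * - u + (K.+1%:R * (lam * u) + mu * u) = 0 by rewrite mu_def; ring.
by rewrite expR0.
Qed.

Section PrimeSwapBound.
Variables (R : realType) (K : nat) (r p Q J lam : R).
Hypotheses (r_gt0 : 0 < r) (r_lt_p : r < p) (r_lt_Q : r < Q).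
Hypotheses (lam_gt0 : 0 < lam) (J_ge0 : 0 <= J).
Hypothesis lam_root : J / r * lam ^+ K.+1 + K.+1%:R * lam - K%:R = 0.
Hypothesis Q_le : Q <= lam * (p - r).

Let u := r / Q.
Let mu := J / r * lam ^+ K.+1.

Let Q_gt0 : 0 < Q. Proof. exact: lt_trans r_lt_Q. Qed.
Let p_gt0 : 0 < p. Proof. exact: lt_trans r_lt_p. Qed.
Let pr_gt0 : 0 < p - r. Proof. by rewrite subr_gt0. Qed.

Let one_sub_u : 1 - u = (Q - r) / Q.
Proof. by rewrite /u; field; rewrite gt_eqF. Qed.

Lemma div_sub_le : p / (p - r) <= 1 + lam * u.
Proof.
have -> : p / (p - r) = 1 + r / (p - r) by field; rewrite gt_eqF.
rewrite lerD2l /u mulrA ler_pdivrMr // mulrAC ler_pdivlMr //.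
by rewrite [lam * r]mulrC -mulrA ler_pM2l.
Qed.

Lemma removed_primes_le (A C : R) : 0 <= C ->
  A * (p - r) ^+ K.+1 <= C * p ^+ K.+1 -> A <= C * (1 + lam * u) ^+ K.+1.
Proof.
move=> C0 hA; apply: le_trans (_ : C * (p / (p - r)) ^+ K.+1 <= _).
  by rewrite expr_div_n mulrA ler_pdivlMr ?exprn_gt0.
rewrite ler_wpM2l // lerXn2r ?nnegrE ?div_sub_le //; first by rewrite divr_ge0 ?ltW.
by rewrite addr_ge0 // mulr_ge0 ?divr_ge0 // ltW.
Qed.

Lemma added_primes_le (B D : R) : 0 < B ->
  D * Q ^+ K <= B * (Q - r) ^+ K -> D / B <= (1 - u) ^+ K.
Proof.
move=> B0 hD; rewrite ler_pdivrMr // one_sub_u expr_div_n mulrAC.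
by rewrite ler_pdivlMr ?exprn_gt0 // [_ * B]mulrC.
Qed.

Lemma jacobsthal_term_le (C D : R) :
  D <= (Q - r) ^+ K -> (p - r) ^+ K.+1 <= C -> J * D <= C * (mu * u) * (1 - u) ^+ K.
Proof.
move=> hD hC.
apply: le_trans (_ : J * (Q - r) ^+ K <= _); first exact: ler_wpM2l.
have -> : C * (mu * u) * (1 - u) ^+ K = J * (Q - r) ^+ K * (C * lam ^+ K.+1 / Q ^+ K.+1).
  rewrite /mu /u one_sub_u expr_div_n !exprS.
  have QK0 : Q ^+ K != 0 by rewrite expf_neq0 // gt_eqF.
  by field; rewrite QK0 !gt_eqF.
rewrite -[leLHS]mulr1 ler_wpM2l ?mulr_ge0 ?exprn_ge0 ?subr_ge0 ?(ltW r_lt_Q) //.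
rewrite ler_pdivlMr ?exprn_gt0 // mul1r.
apply: le_trans (_ : (lam * (p - r)) ^+ K.+1 <= _).
  by rewrite lerXn2r ?nnegrE ?mulr_ge0 // ltW.
by rewrite exprMn mulrC ler_wpM2r // exprn_ge0 // ltW.
Qed.

Lemma prime_swap_real_bound (A B C D : R) : 0 < B -> 0 <= A -> 0 <= D ->
  A * (p - r) ^+ K.+1 <= C * p ^+ K.+1 ->
  D * Q ^+ K <= B * (Q - r) ^+ K ->
  D <= (Q - r) ^+ K ->
  (p - r) ^+ K.+1 <= C ->
  (A / B + J) * D <= C.
Proof.
move=> B0 A0 D0 hA hB hD hC.
have C0 : 0 <= C by apply: le_trans hC; rewrite exprn_ge0 // ltW.
have u0 : 0 <= u by rewrite divr_ge0 // ltW.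
have u1 : u <= 1 by rewrite ler_pdivrMr // mul1r ltW.
have mu0 : 0 <= mu by rewrite mulr_ge0 ?divr_ge0 ?exprn_ge0 // ltW.
have mu_def : mu = K%:R - K.+1%:R * lam by move: lam_root; rewrite /mu; lra.
have hA' := removed_primes_le C0 hA.
have hB' := added_primes_le B0 hB.
rewrite mulrDl -mulrA [B^-1 * D]mulrC.
apply: le_trans (lerD (ler_pM _ _ hA' hB') (jacobsthal_term_le hD hC)) _.
- exact: A0.
- by rewrite divr_ge0 // ltW.
set X := (1 + lam * u) ^+ K.+1; set Y := (1 - u) ^+ K; set Z := mu * u.
have -> : C * X * Y + C * Z * Y = C * (Y * (X + Z)) by ring.
rewrite -[leRHS]mulr1 ler_wpM2l //.
exact: exp_weighted_product_le1 (ltW lam_gt0) mu0 mu_def.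
Qed.

End PrimeSwapBound.

Lemma prime_swap_nat_bound (R : realType) (K r p Q J A B C D : nat) (lam : R) :
  (0 < r)%N -> (r < p)%N -> (r < Q)%N -> (0 < B)%N -> 0 < lam ->
  J%:R / r%:R * lam ^+ K.+1 + K.+1%:R * lam - K%:R = 0 ->
  Q%:R <= lam * (p%:R - r%:R) ->
  (A * (p - r) ^ K.+1 <= C * p ^ K.+1)%N ->
  (D * Q ^ K <= B * (Q - r) ^ K)%N ->
  (D <= (Q - r) ^ K)%N ->
  ((p - r) ^ K.+1 <= C)%N ->
  ((A %/ B + J) * D <= C)%N.
Proof.
move=> r0 rp rQ B0 lam0 lam_root Q_le hA hB hD hC.
have cast_le (a b : nat) : (a <= b)%N -> a%:R <= b%:R :> R by rewrite ler_nat.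
rewrite -(ler_nat R) natrM natrD.
apply: le_trans (prime_swap_real_bound (A := A%:R) (B := B%:R) (C := C%:R) (D := D%:R)
  _ _ _ _ _ lam_root Q_le _ _ _ _ _ _ _); rewrite ?ltr0n ?ltr_nat ?ler0n //.
- rewrite ler_wpM2r ?ler0n // lerD2r ler_pdivlMr ?ltr0n // -natrM ler_nat.
  exact: leq_divM.
- by move/cast_le: hA; rewrite !natrM !natrX natrB ?(ltnW rp).
- by move/cast_le: hB; rewrite !natrM !natrX natrB ?(ltnW rQ).
- by move/cast_le: hD; rewrite natrX natrB ?(ltnW rQ).
- by move/cast_le: hC; rewrite natrX natrB ?(ltnW rp).
Qed.

Theorem lemma3p3 (R : realType) (r n k : nat) (lam : R) :
  (0 < r)%N -> (2 <= k)%N -> inF r n -> (k <= omega n)%N ->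
  (* lam = lambda_k(r), the unique positive real root of (J_r/r) x^k + k x - (k-1) *)
  (0 < lam)%R ->
  ((Jr r)%:R / r%:R * lam ^+ k + k%:R * lam - (k - 1)%:R = 0)%R ->
  (lam * ((P k n)%:R - r%:R) < (Q r n (k - 1))%:R)%R.
Proof.
move=> r0 k2 n_F k_le lam0 lam_root.
have n0 : (0 < n)%N by case: n_F => /andP[].
case: k k2 k_le lam_root => [|K] // K0 k_le lam_root.
rewrite subn1 /= in lam_root *.
have [ps [size_ps ps_uniq ps_primes P_in P_le]] := @largest_primes n K.+1 k_le.
have [qs [size_qs qs_uniq qs_good qs_le]] := smallest_good_primes r K n0.
have r_lt_P : (r < P K.+1 n)%N.
  move: (ps_primes _ P_in); rewrite mem_primes => /and3P[Pp _ Pn].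
  by case: n_F => /inBP[_ /(_ _ Pp Pn)].
rewrite ltNge; apply/negP => Q_le.
have := inF_prime_swap n_F ps_uniq ps_primes qs_uniq qs_good.
rewrite ltnNge => /negP; apply.
apply: prime_swap_nat_bound r0 r_lt_P (Q_gt r n0 K0) _ lam0 lam_root Q_le _ _ _ _.
- by apply: prod_primes_gt0; apply: sub_all qs_good => q /and3P[].
- by have := prod_ratio_le_min r P_le; rewrite size_ps.
- by have := prod_ratio_ge_max r qs_le; rewrite size_qs.
- by have := prod_subn_le r qs_le; rewrite size_qs.
- by have := prod_subn_ge r P_le; rewrite size_ps.
Qed.
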